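(* Let $P$ be an $n$-element poset, $L$ a labeling of $P$, and $x,y\in P$ with $y<_P x$. Fix $\gamma\in\{1,\ldots,n-2\}$ and suppose $L_\gamma(y)>L_\gamma(x)$. Then $L_\gamma(y)=L_{\gamma-1}(y)-1$ (i.e. $y$ is not in the promotion chain of $L_{\gamma-1}$), and moreover $L_{\gamma-1}(y)>L_{\gamma-1}(x)$.
   Context: A labeling of an $n$-element poset $P$ is a bijection $L:P\to[n]$. For a non-maximal $x\in P$, the $L$-successor of $x$ is the element $y>_P x$ with minimal label. The promotion chain of $L$ is $v_1<_P\cdots<_P v_m$ with $v_1=L^{-1}(1)$, $v_{i+1}$ the $L$-successor of $v_i$, and $v_m$ the first maximal element reached. Promotion: $\partial(L)(x)=L(x)-1$ if $x$ is not in the promotion chain; $\partial(L)(v_i)=L(v_{i+1})-1$ for $i<m$; $\partial(L)(v_m)=n$. Write $L_\gamma=\partial^\gamma(L)$, $L_0=L$. *)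

From mathcomp Require Import all_boot all_order.
Set Implicit Arguments. Unset Strict Implicit. Unset Printing Implicit Defensive.
Import Order.Theory.
Local Open Scope order_scope.

Section Promotion.
Variables (d : Order.disp_t) (P : finPOrderType d).

(* L is a labeling: a bijection P -> [n] = {1,...,n}, n = #|P|. *)
Definition is_labeling (L : {ffun P -> nat}) : Prop :=
  injective L /\ (forall x, (1 <= L x <= #|P|)%N) .

Definition label_inv (L : {ffun P -> nat}) (k : nat) : option P :=
  [pick x | L x == k].

Definition lsucc (L : {ffun P -> nat}) (x : P) : option P :=
  [pick y | (x < y) && [forall z, (x < z) ==> (L y <= L z)%N]].

(* follow successors from x until a maximal element is reached
   (fuel is sufficient since the chain is strictly increasing) *)
Fixpoint chain_from (L : {ffun P -> nat}) (fuel : nat) (x : P) : seq P :=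
  match fuel with
  | 0 => [:: x]
  | f.+1 => match lsucc L x with
            | Some y => x :: chain_from L f y
            | None => [:: x]
            end
  end.

Definition promotion_chain (L : {ffun P -> nat}) : seq P :=
  match label_inv L 1 with
  | Some v => chain_from L #|P| v
  | None => [::]
  end.

Definition promote (L : {ffun P -> nat}) : {ffun P -> nat} :=
  let c := promotion_chain L in
  [ffun x => if x \in c then
               let i := index x c in
               if (i.+1 < size c)%N then L (nth x c i.+1) - 1 else #|P|
             else L x - 1].

Definition promote_iter (g : nat) (L : {ffun P -> nat}) : {ffun P -> nat} :=
  iter g promote L.

End Promotion.

(* Promotion lowers every label by at most one, and it moves an element y of the promotion chain
   to the label of its successor s minus one.  If y <_P x, then s has the smallest label above y,
   so L(s) <= L(x), and y's new label L(s) - 1 <= L(x) - 1 cannot exceed x's new label.  Hence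
   an inversion L_gamma(y) > L_gamma(x) forces y off the chain of L_(gamma-1); there y just
   loses one, so the inversion was already present in L_(gamma-1). *)
From mathcomp Require Import all_boot all_order zify.
Import Order.Theory.
Set Implicit Arguments. Unset Strict Implicit. Unset Printing Implicit Defensive.

Section Promotion.
Variables (d : Order.disp_t) (P : finPOrderType d) (M : {ffun P -> nat}).

Lemma lsucc_someP p s :
  lsucc M p = Some s -> (p < s)%O /\ forall z, (p < z)%O -> M s <= M z.
Proof.
rewrite /lsucc; case: pickP => // z /andP[pz /forallP minz] [<-].
by split=> // w pw; move: (minz w); rewrite pw.
Qed.

Lemma lsucc_noneP p z : lsucc M p = None -> ~ (p < z)%O.
Proof.
rewrite /lsucc; case: pickP => // noz _ pz.
have [m pm minm] := arg_minnP (fun w => M w) pz.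
move: (noz m); rewrite pm /= => /negP; apply; apply/forallP=> w.
by apply/implyP; apply: minm.
Qed.

Lemma lsucc_label_le p z s : lsucc M p = Some z -> lsucc M z = Some s -> M z <= M s.
Proof.
move=> /lsucc_someP[pz minz] /lsucc_someP[zs _].
exact/minz/(lt_trans pz zs).
Qed.

Lemma chain_from_cons f x : chain_from M f x = x :: behead (chain_from M f x).
Proof. by case: f => //= f; case: (lsucc M x). Qed.

Lemma chain_from_lsucc f x x0 i : i.+1 < size (chain_from M f x) ->
  lsucc M (nth x0 (chain_from M f x) i) = Some (nth x0 (chain_from M f x) i.+1).
Proof.
elim: f x i => [|f IH] x i //=; case sx: (lsucc M x) => [y|] //=.
case: i => [|i] /= lt_i; last exact: IH.
by rewrite chain_from_cons.
Qed.

Lemma chain_from_sorted f x : sorted <%O (chain_from M f x).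
Proof. by apply/(sortedP x) => i /(chain_from_lsucc x) /lsucc_someP[]. Qed.

Lemma chain_from_end f x :
  lsucc M (last x (chain_from M f x)) = None \/ size (chain_from M f x) = f.+1.
Proof.
elim: f x => [|f IH] x /=; first by right.
case sx: (lsucc M x) => [y|] /=; last by left.
by move: (IH y); rewrite chain_from_cons /= => -[->|->]; [left|right].
Qed.

Local Notation c := (promotion_chain M).

Lemma promotion_chain_lsucc x0 i : i.+1 < size c ->
  lsucc M (nth x0 c i) = Some (nth x0 c i.+1).
Proof. by rewrite /promotion_chain; case: label_inv => // v; apply: chain_from_lsucc. Qed.

(* The fuel #|P| suffices: the chain is strictly increasing, hence duplicate-free. *)
Lemma promotion_chain_maximal z : z \in c -> size c <= (index z c).+1 -> lsucc M z = None.
Proof.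
rewrite /promotion_chain; case: label_inv => // v; set s := chain_from M _ v => zs le_s.
have -> : z = last v s.
  rewrite -nth_last -[in LHS](nth_index v zs); congr nth.
  by move: le_s; rewrite -index_mem in zs; move: (index z s) (size s) zs; lia.
case: (chain_from_end #|P| v) => // size_s.
have /card_uniqP := lt_sorted_uniq (chain_from_sorted #|P| v).
by rewrite size_s => card_s; have := max_card (mem s); rewrite card_s ltnn.
Qed.

Lemma promotion_chain_pred z : z \in c -> M z = 1 \/ exists p, lsucc M p = Some z.
Proof.
move=> zc; have zE := nth_index z zc.
case iz: (index z c) zE => [|i] zE.
  left; move: zc zE; rewrite /promotion_chain /label_inv.
  by case: pickP => // v /eqP Mv _; rewrite chain_from_cons => <-.
right; exists (nth z c i); rewrite -{2}zE; apply: promotion_chain_lsucc.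
by rewrite -iz index_mem.
Qed.

Lemma promoteE z : promote M z =
  if z \in c then (if lsucc M z is Some s then M s - 1 else #|P|) else M z - 1.
Proof.
rewrite /promote ffunE; case: ifP => // zc.
case: ltnP => [lt_i | le_i]; last by rewrite promotion_chain_maximal.
by rewrite -[in lsucc M z](nth_index z zc) (promotion_chain_lsucc z lt_i).
Qed.

Hypothesis M_le_card : forall z, M z <= #|P|.

Lemma promote_le_card z : promote M z <= #|P|.
Proof.
rewrite promoteE; case: ifP => _; last exact: leq_trans (leq_subr _ _) (M_le_card z).
by case: lsucc => // s; exact: leq_trans (leq_subr _ _) (M_le_card s).
Qed.

Lemma promote_ge_pred z : M z - 1 <= promote M z.
Proof.
rewrite promoteE; case: ifP => zc //.
case sz: lsucc => [s|]; last exact: leq_trans (leq_subr _ _) (M_le_card z).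
(* The head of the chain has label 1, so the truncated [M z - 1] vanishes there. *)
case: (promotion_chain_pred zc) => [-> // | [p pz]].
exact/leq_sub2r/(lsucc_label_le pz sz).
Qed.

Lemma promote_inversion (x y : P) : (y < x)%O -> promote M x < promote M y ->
  [/\ promote M y = M y - 1, y \notin c & M x < M y].
Proof.
move=> yx inv; have Mx_le := promote_ge_pred x.
have yc : y \notin c.
  apply/negP => yc; move: inv; rewrite (promoteE y) yc.
  case sy: lsucc => [s|]; last by have := lsucc_noneP sy yx.
  have [_ /(_ x yx) Ms_le] := lsucc_someP sy.
  by rewrite ltnNge (leq_trans (leq_sub2r 1 Ms_le) Mx_le).
have Py : promote M y = M y - 1 by rewrite promoteE (negbTE yc).
by split=> //; move: inv Mx_le; rewrite Py; lia.
Qed.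

End Promotion.

Lemma promote_iter_le_card d (P : finPOrderType d) (L : {ffun P -> nat}) g z :
  is_labeling L -> promote_iter g L z <= #|P|.
Proof.
case=> _ L_range; elim: g z => [|g IH] z; first by case/andP: (L_range z).
exact: promote_le_card.
Qed.

Theorem mainTheorem2 (d : Order.disp_t) (P : finPOrderType d)
    (L : {ffun P -> nat}) (x y : P) (gamma : nat) :
  is_labeling L ->
  (y < x)%O ->
  (1 <= gamma <= #|P| - 2)%N ->
  (promote_iter gamma L x < promote_iter gamma L y)%N ->
  promote_iter gamma L y = promote_iter gamma.-1 L y - 1
  /\ y \notin promotion_chain (promote_iter gamma.-1 L)
  /\ (promote_iter gamma.-1 L x < promote_iter gamma.-1 L y)%N.
Proof.
move=> labL yx /andP[gamma_ge1 _]; case: gamma gamma_ge1 => // g _ inv.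
by have [] := promote_inversion (promote_iter_le_card g ^~ labL) yx inv.
Qed.
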